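(* Let $G$ be a differentiable groupoid object in a tangent category $\mathcal C$. For every differentiable right $G$-bundle $E$ the square $$\begin{array}{ccc}V_2E&\xrightarrow{\lambda'_{2,E}}&V^{[2]}E\\ \downarrow{\scriptstyle\pi'_E\circ\mathrm{pr}_1}&&\downarrow{\scriptstyle\pi'^{[1]}_E}\\ E&\xrightarrow{0'_E}&VE\end{array}$$ commutes and is a pullback in the category of right $G$-bundles and $G$-equivariant bundle morphisms (and in $\mathcal C$).
   Context: Tangent category (Rosický, with negatives): a category $\mathcal C$ with an endofunctor $T$ and natural transformations $\pi:T\Rightarrow\mathrm{id}$, $0:\mathrm{id}\Rightarrow T$, $+:T_2\Rightarrow T$, $\lambda:T\Rightarrow T^2$, $\tau:T^2\Rightarrow T^2$ satisfying Rosický's axioms ($T_kX$ = $k$-fold fiber product of $\pi_X$, existing and preserved by $T$; $(\pi_X,0_X,+_X)$ abelian group object in $\mathcal C/X$; additive symmetric structure $\tau$ with $\pi T\circ\tau=T\pi$; additive $\lambda$ with $\pi T\circ\lambda=0\circ\pi$, $\lambda T\circ\lambda=T\lambda\circ\lambda$, $\tau\circ\lambda=\lambda$, $T\tau\circ\tau T\circ T\lambda=\lambda T\circ\tau$; the square $(\lambda,(\pi T,T\pi),\pi,(0,0))$ a pointwise pullback). $\lambda_{2,X}=\tau_X\circ+_{TX}\circ(T0_X\times_{0_X}\lambda_X)$; it is a fact that the square $\lambda_2:T_2\to T^2$, $T\pi:T^2\to T$, $\pi\circ\mathrm{pr}_1:T_2\to\mathrm{id}$, $0:\mathrm{id}\to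 T$ is a pointwise pullback. $0^{[n]}_X=T^{n-1}0_X\circ\cdots\circ0_X$, $0_{(m),X}=(0_X,\dots,0_X)$. Groupoid object $G$ and differentiability: $G=(G_0,G_1,s,t,1,i,m)$ with iterated fiber products $G_k$; $t_k=t\circ\mathrm{pr}_1$, $t_0=\mathrm{id}$; for all $n\ge1,m\ge2,k\ge0$ the pullbacks $T^nG_1\times^{T^ns,T^nt_k}_{T^nG_0}T^nG_k$, $T^nG_1\times^{T^ns,0^{[n]}_{G_0}\circ t_k}_{T^nG_0}G_k$, $T_mG_1\times^{T_ms,0_{(m),G_0}\circ t_k}_{T_mG_0}G_k$, $G_0\times^{1,\pi_{G_1}\circ\mathrm{pr}_1}_{G_1}(TG_1\times^{Ts,0_{G_0}}_{TG_0}G_0)$ exist and $T^n(G_1\times^{s,t_k}_{G_0}G_k)\to T^nG_1\times_{T^nG_0}T^nG_k$ is an iso. Right $G$-bundles $r:E\to G_0$ (unital associative action $\beta_E$ with $r\circ\beta_E=s\circ\mathrm{pr}_2$), equivariant morphisms, and differentiable bundles (pullbacks $T^nE\times^{T^nr,T^nt_k}T^nG_k$, $T^nE\times^{T^nr,0^{[n]}_{G_0}\circ t_k}G_k$, $T_mE\times^{T_mr,0_{(m),G_0}\circ t_k}G_k$ exist and $T^n(E\times_{G_0}G_k)\cong T^nE\times_{T^nG_0}T^nG_k$ canonically). $V^{[n]}E=T^nE\times^{T^nr,0^{[n]}_{G_0}}_{T^nG_0}G_0$ with monomorphism $i_{V^{[n]}E}$ to $T^nE$ and the right $G$-action induced from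 $T^n\beta_E$; $VE=V^{[1]}E$; $V_2E=VE\times_EVE$ (over $\pi'_E$) with diagonal action and monomorphism $i_{V_2E}:V_2E\to T_2E$. $\pi'_E=\pi_E\circ i_{VE}$; $0'_E:E\to VE$ the unique map with $i_{VE}\circ0'_E=0_E$; $\lambda'_{2,E}:V_2E\to V^{[2]}E$ the unique map with $i_{V^{[2]}E}\circ\lambda'_{2,E}=\lambda_{2,E}\circ i_{V_2E}$; $\pi'^{[1]}_E:V^{[2]}E\to VE$ the unique map with $i_{VE}\circ\pi'^{[1]}_E=T\pi_E\circ i_{V^{[2]}E}$ (the first vertical prolongation of $\pi'$). All of these are $G$-equivariant bundle morphisms. *)

From Stdlib Require Import PeanoNat.

Set Implicit Arguments.
Unset Strict Implicit.

Record Cat := {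
  Ob :> Type;
  Hom : Ob -> Ob -> Type;
  idm : forall X : Ob, Hom X X;
  comp : forall X Y Z : Ob, Hom Y Z -> Hom X Y -> Hom X Z;
  comp_id_l : forall X Y (f : Hom X Y), comp (idm Y) f = f;
  comp_id_r : forall X Y (f : Hom X Y), comp f (idm X) = f;
  comp_assoc : forall X Y Z W (h : Hom Z W) (g : Hom Y Z) (f : Hom X Y),
      comp h (comp g f) = comp (comp h g) f }.

Arguments Hom {c} _ _.
Arguments idm {c} X.
Arguments comp {c X Y Z} _ _.

Notation "g ∘ f" := (comp g f) (at level 40, left associativity).

Record Functor (C : Cat) := {
  fobj :> Ob C -> Ob C;
  fmap : forall X Y : Ob C, Hom X Y -> Hom (fobj X) (fobj Y);
  fmap_id : forall X, fmap (idm X) = idm (fobj X);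
  fmap_comp : forall X Y Z (g : Hom Y Z) (f : Hom X Y),
      fmap (g ∘ f) = fmap g ∘ fmap f }.

Arguments fmap {C} f {X Y} _ : rename.

Section Basics.
Context {C : Cat}.

Definition is_pullback {A B Z P : C} (f : Hom A Z) (g : Hom B Z)
    (p : Hom P A) (q : Hom P B) : Prop :=
  f ∘ p = g ∘ q /\
  forall (X : C) (a : Hom X A) (b : Hom X B), f ∘ a = g ∘ b ->
    exists! h : Hom X P, p ∘ h = a /\ q ∘ h = b.

Definition has_pullback {A B Z : C} (f : Hom A Z) (g : Hom B Z) : Prop :=
  exists (P : C) (p : Hom P A) (q : Hom P B), is_pullback f g p q.

Definition is_wide_pullback {Y Z P : C} (k : nat) (f : Hom Y Z)
    (pr : nat -> Hom P Y) : Prop :=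
  (forall i j, (i < k)%nat -> (j < k)%nat -> f ∘ pr i = f ∘ pr j) /\
  forall (X : C) (a : nat -> Hom X Y),
    (forall i j, (i < k)%nat -> (j < k)%nat -> f ∘ a i = f ∘ a j) ->
    exists! h : Hom X P, forall i, (i < k)%nat -> pr i ∘ h = a i.

Fixpoint Tn (F : Functor C) (n : nat) (X : C) : C :=
  match n with 0 => X | S m => Tn F m (F X) end.

Fixpoint Tn_map (F : Functor C) (n : nat) {X Y : C} (f : Hom X Y)
  : Hom (Tn F n X) (Tn F n Y) :=
  match n with 0 => f | S m => Tn_map F m (fmap F f) end.

End Basics.

Record TangentData (C : Cat) := {
  tT : Functor C;
  tpi : forall X : C, Hom (tT X) X;
  tzero : forall X : C, Hom X (tT X);
  tTm : nat -> C -> C;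
  tpr : forall (k : nat) (X : C), nat -> Hom (tTm k X) (tT X);
  tplus : forall X : C, Hom (tTm 2 X) (tT X);
  tneg : forall X : C, Hom (tT X) (tT X);
  tlam : forall X : C, Hom (tT X) (tT (tT X));
  ttau : forall X : C, Hom (tT (tT X)) (tT (tT X)) }.

Arguments tT {C} t.
Arguments tpi {C} t X.
Arguments tzero {C} t X.
Arguments tTm {C} t k X.
Arguments tpr {C} t k X i.
Arguments tplus {C} t X.
Arguments tneg {C} t X.
Arguments tlam {C} t X.
Arguments ttau {C} t X.

Section Tangent.
Context {C : Cat} (t : TangentData C).
Local Notation T := (tT t).
Local Notation T1 f := (fmap (tT t) f).
Local Notation π := (tpi t).
Local Notation z0 := (tzero t).
Local Notation Tm := (tTm t).
Local Notation pr := (tpr t).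
Local Notation pl := (tplus t).
Local Notation ng := (tneg t).
Local Notation λ := (tlam t).
Local Notation τ := (ttau t).

Definition tangent_axioms : Prop :=
  (forall X Y (f : Hom X Y), f ∘ π X = π Y ∘ T1 f) /\
  (forall X Y (f : Hom X Y), T1 f ∘ z0 X = z0 Y ∘ f) /\
  (forall X Y (f : Hom X Y) (h : Hom (Tm 2 X) (Tm 2 Y)),
      pr 2 Y 0 ∘ h = T1 f ∘ pr 2 X 0 -> pr 2 Y 1 ∘ h = T1 f ∘ pr 2 X 1 ->
      pl Y ∘ h = T1 f ∘ pl X) /\
  (forall X Y (f : Hom X Y), T1 f ∘ ng X = ng Y ∘ T1 f) /\
  (forall X Y (f : Hom X Y), T1 (T1 f) ∘ λ X = λ Y ∘ T1 f) /\
  (forall X Y (f : Hom X Y), T1 (T1 f) ∘ τ X = τ Y ∘ T1 (T1 f)) /\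
  (forall k X, (1 <= k)%nat -> is_wide_pullback k (π X) (pr k X)) /\
  (forall k X, (1 <= k)%nat ->
      is_wide_pullback k (T1 (π X)) (fun i => T1 (pr k X i))) /\
  (* (pi_X, 0_X, +_X, -_X) is an abelian group object in C/X *)
  (forall X, π X ∘ z0 X = idm X) /\
  (forall X, π X ∘ pl X = π X ∘ pr 2 X 0) /\
  (forall X, π X ∘ ng X = π X) /\
  (forall X (h : Hom (T X) (Tm 2 X)),
      pr 2 X 0 ∘ h = z0 X ∘ π X -> pr 2 X 1 ∘ h = idm (T X) -> pl X ∘ h = idm (T X)) /\
  (forall X (h : Hom (Tm 2 X) (Tm 2 X)),
      pr 2 X 0 ∘ h = pr 2 X 1 -> pr 2 X 1 ∘ h = pr 2 X 0 -> pl X ∘ h = pl X) /\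
  (forall X (a b c d : Hom (Tm 3 X) (Tm 2 X)),
      pr 2 X 0 ∘ a = pr 3 X 0 -> pr 2 X 1 ∘ a = pr 3 X 1 ->
      pr 2 X 0 ∘ b = pl X ∘ a -> pr 2 X 1 ∘ b = pr 3 X 2 ->
      pr 2 X 0 ∘ c = pr 3 X 1 -> pr 2 X 1 ∘ c = pr 3 X 2 ->
      pr 2 X 0 ∘ d = pr 3 X 0 -> pr 2 X 1 ∘ d = pl X ∘ c ->
      pl X ∘ b = pl X ∘ d) /\
  (forall X (h : Hom (T X) (Tm 2 X)),
      pr 2 X 0 ∘ h = idm (T X) -> pr 2 X 1 ∘ h = ng X -> pl X ∘ h = z0 X ∘ π X) /\
  (forall X, π (T X) ∘ τ X = T1 (π X)) /\
  (forall X, τ X ∘ τ X = idm (T (T X))) /\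
  (forall X, T1 (τ X) ∘ τ (T X) ∘ T1 (τ X) = τ (T X) ∘ T1 (τ X) ∘ τ (T X)) /\
  (* tau additive: (T^2X, T pi, T0, T+) -> (T^2X, pi T, 0 T, + T) *)
  (forall X, τ X ∘ T1 (z0 X) = z0 (T X)) /\
  (forall X (h : Hom (T (Tm 2 X)) (Tm 2 (T X))),
      pr 2 (T X) 0 ∘ h = τ X ∘ T1 (pr 2 X 0) ->
      pr 2 (T X) 1 ∘ h = τ X ∘ T1 (pr 2 X 1) ->
      pl (T X) ∘ h = τ X ∘ T1 (pl X)) /\
  (* lift lambda: additive into (T pi, T0, T+) and into (pi T, 0 T, + T) *)
  (forall X, T1 (π X) ∘ λ X = z0 X ∘ π X) /\
  (forall X, π (T X) ∘ λ X = z0 X ∘ π X) /\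
  (forall X, λ X ∘ z0 X = T1 (z0 X) ∘ z0 X) /\
  (forall X, λ X ∘ z0 X = z0 (T X) ∘ z0 X) /\
  (forall X (h : Hom (Tm 2 X) (T (Tm 2 X))),
      T1 (pr 2 X 0) ∘ h = λ X ∘ pr 2 X 0 -> T1 (pr 2 X 1) ∘ h = λ X ∘ pr 2 X 1 ->
      λ X ∘ pl X = T1 (pl X) ∘ h) /\
  (forall X (h : Hom (Tm 2 X) (Tm 2 (T X))),
      pr 2 (T X) 0 ∘ h = λ X ∘ pr 2 X 0 -> pr 2 (T X) 1 ∘ h = λ X ∘ pr 2 X 1 ->
      λ X ∘ pl X = pl (T X) ∘ h) /\
  (forall X, λ (T X) ∘ λ X = T1 (λ X) ∘ λ X) /\
  (forall X, τ X ∘ λ X = λ X) /\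
  (forall X, T1 (τ X) ∘ τ (T X) ∘ T1 (λ X) = λ (T X) ∘ τ X) /\
  (forall X (pp : Hom (T (T X)) (Tm 2 X)) (zz : Hom X (Tm 2 X)),
      pr 2 X 0 ∘ pp = π (T X) -> pr 2 X 1 ∘ pp = T1 (π X) ->
      pr 2 X 0 ∘ zz = z0 X -> pr 2 X 1 ∘ zz = z0 X ->
      is_pullback pp zz (λ X) (π X)).

Fixpoint zn (n : nat) (X : C) : Hom X (Tn T n X) :=
  match n with
  | 0 => idm X
  | S m => Tn_map T m (z0 X) ∘ zn m X
  end.

(* lambda_{2,X} = tau_X o +_{TX} o (T0_X x_{0_X} lambda_X) : T_2 X -> T^2 X,
   characterized through any witness h of the pairing map. *)
Definition is_lambda2 (X : C) (l2 : Hom (Tm 2 X) (T (T X))) : Prop :=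
  forall h : Hom (Tm 2 X) (Tm 2 (T X)),
    pr 2 (T X) 0 ∘ h = T1 (z0 X) ∘ pr 2 X 0 ->
    pr 2 (T X) 1 ∘ h = λ X ∘ pr 2 X 1 ->
    l2 = τ X ∘ pl (T X) ∘ h.

End Tangent.

(* Gs k is the object G_k of composable k-tuples; G_0 := Gs 0 is the object
   of objects, tk k = t_k : G_k -> G_0 (t_0 = id, t_{k+1} = t o pr_1) and
   G_{k+1} = G_1 x^{s,t_k}_{G_0} G_k with projections gp1 k, gp2 k. *)
Record GroupoidData (C : Cat) := {
  Gs : nat -> C;
  G1 : C;
  gs : Hom G1 (Gs 0);
  gt : Hom G1 (Gs 0);
  gu : Hom (Gs 0) G1;
  gi : Hom G1 G1;
  gm : Hom (Gs 2) G1;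
  tk : forall k, Hom (Gs k) (Gs 0);
  gp1 : forall k, Hom (Gs (S k)) G1;
  gp2 : forall k, Hom (Gs (S k)) (Gs k) }.

Arguments Gs {C} g k.
Arguments G1 {C} g.
Arguments gs {C} g.
Arguments gt {C} g.
Arguments gu {C} g.
Arguments gi {C} g.
Arguments gm {C} g.
Arguments tk {C} g k.
Arguments gp1 {C} g k.
Arguments gp2 {C} g k.

Section Groupoid.
Context {C : Cat} (G : GroupoidData C).
Local Notation G0 := (Gs G 0).

Definition g21 : Hom (Gs G 2) (G1 G) := gp1 G 1.
Definition g22 : Hom (Gs G 2) (G1 G) := gp1 G 0 ∘ gp2 G 1.

Definition groupoid_axioms : Prop :=
  tk G 0 = idm G0 /\
  (forall k, tk G (S k) = gt G ∘ gp1 G k) /\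
  (forall k, is_pullback (gs G) (tk G k) (gp1 G k) (gp2 G k)) /\
  gs G ∘ gu G = idm G0 /\ gt G ∘ gu G = idm G0 /\
  gs G ∘ gm G = gs G ∘ g22 /\ gt G ∘ gm G = gt G ∘ g21 /\
  (forall x y z : Hom (Gs G 3) (Gs G 2),
      g21 ∘ x = gp1 G 2 -> g22 ∘ x = gp1 G 1 ∘ gp2 G 2 ->
      g21 ∘ y = gm G ∘ x -> g22 ∘ y = gp1 G 0 ∘ gp2 G 1 ∘ gp2 G 2 ->
      g21 ∘ z = gp1 G 2 -> g22 ∘ z = gm G ∘ gp2 G 2 ->
      gm G ∘ y = gm G ∘ z) /\
  (forall h : Hom (G1 G) (Gs G 2),
      g21 ∘ h = gu G ∘ gt G -> g22 ∘ h = idm (G1 G) -> gm G ∘ h = idm (G1 G)) /\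
  (forall h : Hom (G1 G) (Gs G 2),
      g21 ∘ h = idm (G1 G) -> g22 ∘ h = gu G ∘ gs G -> gm G ∘ h = idm (G1 G)) /\
  gs G ∘ gi G = gt G /\ gt G ∘ gi G = gs G /\
  (forall h : Hom (G1 G) (Gs G 2),
      g21 ∘ h = idm (G1 G) -> g22 ∘ h = gi G -> gm G ∘ h = gu G ∘ gt G) /\
  (forall h : Hom (G1 G) (Gs G 2),
      g21 ∘ h = gi G -> g22 ∘ h = idm (G1 G) -> gm G ∘ h = gu G ∘ gs G).

Section Diff.
Context (t : TangentData C).
Local Notation T := (tT t).
Local Notation T1 f := (fmap (tT t) f).

Definition differentiable_groupoid : Prop :=
  (forall n k, (1 <= n)%nat ->
      has_pullback (Tn_map T n (gs G)) (Tn_map T n (tk G k))) /\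
  (forall n k, (1 <= n)%nat ->
      has_pullback (Tn_map T n (gs G)) (zn t n G0 ∘ tk G k)) /\
  (forall m k (u : Hom (tTm t m (G1 G)) (tTm t m G0)) (z : Hom G0 (tTm t m G0)),
      (2 <= m)%nat ->
      (forall i, (i < m)%nat -> tpr t m G0 i ∘ u = T1 (gs G) ∘ tpr t m (G1 G) i) ->
      (forall i, (i < m)%nat -> tpr t m G0 i ∘ z = tzero t G0) ->
      has_pullback u (z ∘ tk G k)) /\
  (forall (Q : C) (q1 : Hom Q (T (G1 G))) (q2 : Hom Q G0),
      is_pullback (T1 (gs G)) (tzero t G0) q1 q2 ->
      has_pullback (gu G) (tpi t (G1 G) ∘ q1)) /\
  (forall n k, (1 <= n)%nat ->
      is_pullback (Tn_map T n (gs G)) (Tn_map T n (tk G k))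
                  (Tn_map T n (gp1 G k)) (Tn_map T n (gp2 G k))).
End Diff.

(* Action data: r : E -> G_0, the object bA = E x^{r,t}_{G_0} G_1 with its
   projections, and the action map bact : E x_{G_0} G_1 -> E. *)
Record ActData := {
  bE : C;
  br : Hom bE G0;
  bA : C;
  baE : Hom bA bE;
  baG : Hom bA (G1 G);
  bact : Hom bA bE }.

Definition act_pullback (X : ActData) : Prop :=
  is_pullback (br X) (gt G) (baE X) (baG X).

(* a right G-bundle: action data together with E x^{r,t_2}_{G_0} G_2 *)
Record Bundle := {
  bd :> ActData;
  bA2 : C;
  ba2E : Hom bA2 (bE bd);
  ba2G : Hom bA2 (Gs G 2) }.

Definition bundle_axioms (E : Bundle) : Prop :=
  act_pullback E /\
  is_pullback (br E) (tk G 2) (ba2E E) (ba2G E) /\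
  br E ∘ bact E = gs G ∘ baG E /\
  (forall h : Hom (bE E) (bA E),
      baE E ∘ h = idm (bE E) -> baG E ∘ h = gu G ∘ br E -> bact E ∘ h = idm (bE E)) /\
  (forall x y z : Hom (bA2 E) (bA E),
      baE E ∘ x = ba2E E -> baG E ∘ x = g21 ∘ ba2G E ->
      baE E ∘ y = bact E ∘ x -> baG E ∘ y = g22 ∘ ba2G E ->
      baE E ∘ z = ba2E E -> baG E ∘ z = gm G ∘ ba2G E ->
      bact E ∘ y = bact E ∘ z).

Definition equivariant (X Y : ActData) (f : Hom (bE X) (bE Y)) : Prop :=
  br Y ∘ f = br X /\
  forall h : Hom (bA X) (bA Y),
    baE Y ∘ h = f ∘ baE X -> baG Y ∘ h = baG X ->
    f ∘ bact X = bact Y ∘ h.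

Section DiffBundle.
Context (t : TangentData C).
Local Notation T := (tT t).
Local Notation T1 f := (fmap (tT t) f).

Definition differentiable_bundle (E : Bundle) : Prop :=
  (forall k, has_pullback (br E) (tk G k)) /\
  (forall n k, (1 <= n)%nat ->
      has_pullback (Tn_map T n (br E)) (Tn_map T n (tk G k))) /\
  (forall n k, (1 <= n)%nat ->
      has_pullback (Tn_map T n (br E)) (zn t n G0 ∘ tk G k)) /\
  (forall m k (u : Hom (tTm t m (bE E)) (tTm t m G0)) (z : Hom G0 (tTm t m G0)),
      (2 <= m)%nat ->
      (forall i, (i < m)%nat -> tpr t m G0 i ∘ u = T1 (br E) ∘ tpr t m (bE E) i) ->
      (forall i, (i < m)%nat -> tpr t m G0 i ∘ z = tzero t G0) ->
      has_pullback u (z ∘ tk G k)) /\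
  (forall n k (P : C) (p : Hom P (bE E)) (q : Hom P (Gs G k)), (1 <= n)%nat ->
      is_pullback (br E) (tk G k) p q ->
      is_pullback (Tn_map T n (br E)) (Tn_map T n (tk G k))
                  (Tn_map T n p) (Tn_map T n q)).

(* V^[n]E = T^nE x^{T^n r, 0^[n]}_{T^n G_0} G_0 with monomorphism i : V^[n]E -> T^nE
   and bundle map the G_0-projection; its right G-action (on
   V^[n]E x^{r,t}_{G_0} G_1) is the one induced from T^n beta_E. *)
Definition is_vertical_bundle (n : nat) (E : ActData) (V : ActData)
    (i : Hom (bE V) (Tn T n (bE E))) : Prop :=
  is_pullback (Tn_map T n (br E)) (zn t n G0) i (br V) /\
  act_pullback V /\
  (forall φ : Hom (bA V) (Tn T n (bA E)),
      Tn_map T n (baE E) ∘ φ = i ∘ baE V ->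
      Tn_map T n (baG E) ∘ φ = zn t n (G1 G) ∘ baG V ->
      i ∘ bact V = Tn_map T n (bact E) ∘ φ).

End DiffBundle.
End Groupoid.

Arguments ActData {C} G.
Arguments Bundle {C} G.
Arguments is_vertical_bundle {C G} t n E V i.
Arguments differentiable_bundle {C G} t E.
Arguments differentiable_groupoid {C} G t.
Arguments equivariant {C G} X Y f.
Arguments bundle_axioms {C G} E.
Arguments act_pullback {C G} X.
Arguments is_lambda2 {C} t X l2.

(* The square is the restriction of the square [λ_2 : T_2E -> T^2E],
   [π ∘ pr_1 : T_2E -> E], [Tπ : T^2E -> TE], [0 : E -> TE] along the vertical
   monomorphisms into [T_2E], [T^2E] and [TE]; that square is a pullback by the
   universality of the lift [λ] together with the fibrewise abelian group structure
   of [T]. A cone over the vertical square therefore yields a point [e] of [T_2E]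
   with [λ_2 e] vertical. Applying [T_2 r] and using that [λ_2] detects the zero
   pair on [T_2 G_0], both components of [e] are vertical, so [e] lies in [V_2E].
   In the category of right [G]-bundles, [λ'_2] and [π' ∘ pr_1] are equivariant (the
   action on [V_2E] lifts through [λ_2] by naturality) and jointly monic, so the
   mediating map is equivariant as well. *)

From Stdlib Require Import ClassicalEpsilon Lia.

Ltac right_assoc := repeat rewrite <- comp_assoc.

Section Pullbacks.
Context {C : Cat}.

Lemma comp_eq_r {X Y Z : C} {f : Hom Y Z} {g : Hom X Y} {h : Hom X Z} :
  f ∘ g = h -> forall W (k : Hom W X), f ∘ (g ∘ k) = h ∘ k.
Proof. intros H W k. rewrite comp_assoc, H. reflexivity. Qed.

Lemma pullback_factor {A B Z P : C} {f : Hom A Z} {g : Hom B Z} {p : Hom P A} {q : Hom P B} :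
  is_pullback f g p q -> forall X (a : Hom X A) (b : Hom X B),
  f ∘ a = g ∘ b -> exists h : Hom X P, p ∘ h = a /\ q ∘ h = b.
Proof. intros [_ Hu] X a b H. destruct (Hu X a b H) as [h [Hh _]]. eauto. Qed.

Lemma pullback_jointly_monic {A B Z P : C} {f : Hom A Z} {g : Hom B Z}
    {p : Hom P A} {q : Hom P B} :
  is_pullback f g p q -> forall X (y1 y2 : Hom X P),
  p ∘ y1 = p ∘ y2 -> q ∘ y1 = q ∘ y2 -> y1 = y2.
Proof.
  intros [Hc Hu] X y1 y2 H1 H2.
  destruct (Hu X (p ∘ y1) (q ∘ y1)) as [h [_ Hh]].
  { rewrite !comp_assoc, Hc. reflexivity. }
  rewrite <- (Hh y1 (conj eq_refl eq_refl)). apply Hh. auto.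
Qed.

Lemma pullback_iso_r {A B B' Z P : C} (f : Hom A Z) (g : Hom B Z) (p : Hom P A) (q : Hom P B)
    (j : Hom B B') (j' : Hom B' B) :
  j' ∘ j = idm B -> j ∘ j' = idm B' ->
  is_pullback f g p q -> is_pullback f (g ∘ j') p (j ∘ q).
Proof.
  intros Hjj' Hj'j PB. split.
  - rewrite <- comp_assoc, (comp_assoc j' j q), Hjj', comp_id_l. exact (proj1 PB).
  - intros X a b H. rewrite <- comp_assoc in H.
    destruct (pullback_factor PB X a (j' ∘ b) H) as [h [Ha Hb]].
    exists h. split.
    + split; [exact Ha|]. rewrite <- comp_assoc, Hb, comp_assoc, Hj'j. apply comp_id_l.
    + intros h' [Ha' Hb']. apply (pullback_jointly_monic PB); [congruence|].
      rewrite Hb, <- Hb', !comp_assoc, Hjj', comp_id_l. reflexivity.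
Qed.

Lemma pullback_id_iso {A Z P : C} {f : Hom A Z} {p : Hom P A} {q : Hom P Z} :
  is_pullback f (idm Z) p q -> exists u, p ∘ u = idm A /\ u ∘ p = idm P.
Proof.
  intro PB.
  destruct (pullback_factor PB A (idm A) f) as [u [Hp Hq]].
  { rewrite comp_id_l. apply comp_id_r. }
  exists u. split; [exact Hp|].
  apply (pullback_jointly_monic PB).
  - rewrite comp_assoc, Hp, comp_id_l. symmetry. apply comp_id_r.
  - rewrite comp_assoc, Hq, (proj1 PB), comp_id_l. symmetry. apply comp_id_r.
Qed.

Lemma pullback_leg_of_retraction {A B Z P : C} {f : Hom A Z} {g : Hom B Z}
    {p : Hom P A} {q : Hom P B} (r : Hom Z B) :
  is_pullback f g p q -> r ∘ g = idm B -> q = r ∘ (f ∘ p).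
Proof.
  intros [Hc _] Hr. rewrite Hc, comp_assoc, Hr. symmetry. apply comp_id_l.
Qed.

Lemma pullback_mono_of_retraction {A B Z P : C} {f : Hom A Z} {g : Hom B Z}
    {p : Hom P A} {q : Hom P B} (r : Hom Z B) :
  is_pullback f g p q -> r ∘ g = idm B ->
  forall X (y1 y2 : Hom X P), p ∘ y1 = p ∘ y2 -> y1 = y2.
Proof.
  intros PB Hr X y1 y2 H. apply (pullback_jointly_monic PB); [exact H|].
  rewrite (pullback_leg_of_retraction r PB Hr). right_assoc. rewrite H. reflexivity.
Qed.

Lemma wide_pullback_factor {Y Z P : C} {k : nat} {f : Hom Y Z} {pr : nat -> Hom P Y} :
  is_wide_pullback k f pr -> forall X (a : nat -> Hom X Y),
  (forall i j, (i < k)%nat -> (j < k)%nat -> f ∘ a i = f ∘ a j) ->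
  exists h, forall i, (i < k)%nat -> pr i ∘ h = a i.
Proof. intros [_ Hu] X a H. destruct (Hu X a H) as [h [Hh _]]. eauto. Qed.

Lemma wide_pullback_jointly_monic {Y Z P : C} {k : nat} {f : Hom Y Z} {pr : nat -> Hom P Y} :
  is_wide_pullback k f pr -> forall X (y1 y2 : Hom X P),
  (forall i, (i < k)%nat -> pr i ∘ y1 = pr i ∘ y2) -> y1 = y2.
Proof.
  intros [Hc Hu] X y1 y2 H.
  destruct (Hu X (fun i => pr i ∘ y1)) as [h [_ Hh]].
  { intros i j Hi Hj. rewrite !comp_assoc, (Hc i j Hi Hj). reflexivity. }
  rewrite <- (Hh y1 (fun i _ => eq_refl)). apply Hh. intros i Hi. symmetry. auto.
Qed.

End Pullbacks.

Section IteratedFunctor.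
Context {C : Cat} (F : Functor C).

Lemma Tn_map_id n : forall X : C, Tn_map F n (idm X) = idm _.
Proof. induction n; intro X; simpl; [reflexivity|]. rewrite fmap_id. apply IHn. Qed.

Lemma Tn_map_comp n : forall (X Y Z : C) (g : Hom Y Z) (f : Hom X Y),
  Tn_map F n (g ∘ f) = Tn_map F n g ∘ Tn_map F n f.
Proof. induction n; intros; simpl; [reflexivity|]. rewrite fmap_comp. apply IHn. Qed.

End IteratedFunctor.

Section TangentStructure.
Context {C : Cat} (t : TangentData C) (Ht : tangent_axioms t).
Local Notation T := (tT t).
Local Notation T1 f := (fmap (tT t) f).
Local Notation π := (tpi t).
Local Notation z0 := (tzero t).
Local Notation pl := (tplus t).
Local Notation ng := (tneg t).
Local Notation λ := (tlam t).
Local Notation τ := (ttau t).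
Local Notation p0 X := (tpr t 2 X 0).
Local Notation p1 X := (tpr t 2 X 1).

Ltac from_axioms :=
  let H := fresh "H" in pose proof Ht as H; unfold tangent_axioms in H;
  repeat match type of H with _ /\ _ => let H' := fresh "A" in destruct H as [H' H] end;
  assumption.

Lemma tpi_nat X Y (f : Hom X Y) : f ∘ π X = π Y ∘ T1 f.
Proof. revert X Y f. from_axioms. Qed.
Lemma tzero_nat X Y (f : Hom X Y) : T1 f ∘ z0 X = z0 Y ∘ f.
Proof. revert X Y f. from_axioms. Qed.
Lemma tplus_nat {X Y : C} {f : Hom X Y} {h : Hom (tTm t 2 X) (tTm t 2 Y)} :
  p0 Y ∘ h = T1 f ∘ p0 X -> p1 Y ∘ h = T1 f ∘ p1 X -> pl Y ∘ h = T1 f ∘ pl X.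
Proof. revert X Y f h. from_axioms. Qed.
Lemma tneg_nat X Y (f : Hom X Y) : T1 f ∘ ng X = ng Y ∘ T1 f.
Proof. revert X Y f. from_axioms. Qed.
Lemma tlam_nat X Y (f : Hom X Y) : T1 (T1 f) ∘ λ X = λ Y ∘ T1 f.
Proof. revert X Y f. from_axioms. Qed.
Lemma ttau_nat X Y (f : Hom X Y) : T1 (T1 f) ∘ τ X = τ Y ∘ T1 (T1 f).
Proof. revert X Y f. from_axioms. Qed.
Lemma tpr_wide_pullback k X : (1 <= k)%nat -> is_wide_pullback k (π X) (tpr t k X).
Proof. revert k X. from_axioms. Qed.
Lemma tpi_tzero X : π X ∘ z0 X = idm X.
Proof. revert X. from_axioms. Qed.
Lemma tpi_tplus X : π X ∘ pl X = π X ∘ p0 X.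
Proof. revert X. from_axioms. Qed.
Lemma tpi_tneg X : π X ∘ ng X = π X.
Proof. revert X. from_axioms. Qed.
Lemma tplus_zero_ax {X : C} {h : Hom (T X) (tTm t 2 X)} :
  p0 X ∘ h = z0 X ∘ π X -> p1 X ∘ h = idm (T X) -> pl X ∘ h = idm (T X).
Proof. revert X h. from_axioms. Qed.
Lemma tplus_comm_ax {X : C} {h : Hom (tTm t 2 X) (tTm t 2 X)} :
  p0 X ∘ h = p1 X -> p1 X ∘ h = p0 X -> pl X ∘ h = pl X.
Proof. revert X h. from_axioms. Qed.
Lemma tplus_assoc_ax {X : C} {a b c d : Hom (tTm t 3 X) (tTm t 2 X)} :
  p0 X ∘ a = tpr t 3 X 0 -> p1 X ∘ a = tpr t 3 X 1 ->
  p0 X ∘ b = pl X ∘ a -> p1 X ∘ b = tpr t 3 X 2 ->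
  p0 X ∘ c = tpr t 3 X 1 -> p1 X ∘ c = tpr t 3 X 2 ->
  p0 X ∘ d = tpr t 3 X 0 -> p1 X ∘ d = pl X ∘ c ->
  pl X ∘ b = pl X ∘ d.
Proof. revert X a b c d. from_axioms. Qed.
Lemma tplus_neg_ax {X : C} {h : Hom (T X) (tTm t 2 X)} :
  p0 X ∘ h = idm (T X) -> p1 X ∘ h = ng X -> pl X ∘ h = z0 X ∘ π X.
Proof. revert X h. from_axioms. Qed.
Lemma tpi_ttau X : π (T X) ∘ τ X = T1 (π X).
Proof. revert X. from_axioms. Qed.
Lemma ttau_invol X : τ X ∘ τ X = idm (T (T X)).
Proof. revert X. from_axioms. Qed.
Lemma ttau_Tzero X : τ X ∘ T1 (z0 X) = z0 (T X).
Proof. revert X. from_axioms. Qed.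
Lemma tpi_tlam X : π (T X) ∘ λ X = z0 X ∘ π X.
Proof. revert X. from_axioms. Qed.
Lemma Tpi_tlam X : T1 (π X) ∘ λ X = z0 X ∘ π X.
Proof. revert X. from_axioms. Qed.
Lemma tlam_zero_T X : λ X ∘ z0 X = T1 (z0 X) ∘ z0 X.
Proof. revert X. from_axioms. Qed.
Lemma tlam_zero X : λ X ∘ z0 X = z0 (T X) ∘ z0 X.
Proof. revert X. from_axioms. Qed.
Lemma tlam_universal {X : C} {pp : Hom (T (T X)) (tTm t 2 X)} {zz : Hom X (tTm t 2 X)} :
  p0 X ∘ pp = π (T X) -> p1 X ∘ pp = T1 (π X) ->
  p0 X ∘ zz = z0 X -> p1 X ∘ zz = z0 X ->
  is_pullback pp zz (λ X) (π X).
Proof. revert X pp zz. from_axioms. Qed.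

Lemma Tpi_ttau X : T1 (π X) ∘ τ X = π (T X).
Proof. rewrite <- tpi_ttau, <- comp_assoc, ttau_invol. apply comp_id_r. Qed.

Lemma Tpi_Tzero X Y (a : Hom Y (T X)) : T1 (π X) ∘ (T1 (z0 X) ∘ a) = a.
Proof. rewrite comp_assoc, <- fmap_comp, tpi_tzero, fmap_id. apply comp_id_l. Qed.

Lemma tzero_cancel X Y (y1 y2 : Hom Y X) : z0 X ∘ y1 = z0 X ∘ y2 -> y1 = y2.
Proof.
  intro H. rewrite <- (comp_id_l y1), <- (comp_id_l y2), <- (tpi_tzero X).
  right_assoc. rewrite H. reflexivity.
Qed.

Lemma tneg_pi X Y (a : Hom Y (T X)) : π X ∘ (ng X ∘ a) = π X ∘ a.
Proof. rewrite comp_assoc, tpi_tneg. reflexivity. Qed.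

Lemma tpair_exists {X Y : C} {a b : Hom Y (T X)} :
  π X ∘ a = π X ∘ b -> exists k, p0 X ∘ k = a /\ p1 X ∘ k = b.
Proof.
  intro H.
  destruct (wide_pullback_factor (tpr_wide_pullback 2 X ltac:(lia)) Y
              (fun i => match i with 0 => a | _ => b end)) as [k Hk].
  - intros [|[|i]] [|[|j]] Hi Hj; first [lia | reflexivity | exact H | exact (eq_sym H)].
  - exists k. split; [apply (Hk 0) | apply (Hk 1)]; lia.
Qed.

Lemma tpair_jointly_monic X Y (k1 k2 : Hom Y (tTm t 2 X)) :
  p0 X ∘ k1 = p0 X ∘ k2 -> p1 X ∘ k1 = p1 X ∘ k2 -> k1 = k2.
Proof.
  intros H0 H1. apply (wide_pullback_jointly_monic (tpr_wide_pullback 2 X ltac:(lia))).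
  intros [|[|i]] Hi; first [lia | assumption].
Qed.

Lemma tpr_fibred_map X : π X ∘ p0 X = π X ∘ p1 X.
Proof. destruct (tpr_wide_pullback 2 X ltac:(lia)) as [Hc _]. apply Hc; lia. Qed.

Lemma tpr_fibred X Y (k : Hom Y (tTm t 2 X)) : π X ∘ (p0 X ∘ k) = π X ∘ (p1 X ∘ k).
Proof. rewrite !comp_assoc, tpr_fibred_map. reflexivity. Qed.

(* [pl X] applied to the pairing of [a] and [b]; if [π a <> π b] there is no
   pairing and the value is an arbitrary choice. *)
Definition tadd {X Y} (a b : Hom Y (T X)) : Hom Y (T X) :=
  epsilon (inhabits a) (fun s => exists k, p0 X ∘ k = a /\ p1 X ∘ k = b /\ pl X ∘ k = s).

Lemma tadd_spec {X Y : C} {a b : Hom Y (T X)} {k} :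
  p0 X ∘ k = a -> p1 X ∘ k = b -> pl X ∘ k = tadd a b.
Proof.
  intros H0 H1. unfold tadd.
  destruct (epsilon_spec (inhabits a)
     (fun s => exists k, p0 X ∘ k = a /\ p1 X ∘ k = b /\ pl X ∘ k = s)
     (ex_intro _ (pl X ∘ k) (ex_intro _ k (conj H0 (conj H1 eq_refl)))))
    as [k' [H0' [H1' <-]]].
  f_equal. apply tpair_jointly_monic; congruence.
Qed.

Lemma tadd_pi {X Y : C} {a b : Hom Y (T X)} :
  π X ∘ a = π X ∘ b -> π X ∘ tadd a b = π X ∘ a.
Proof.
  intro H. destruct (tpair_exists H) as [k [H0 H1]].
  rewrite <- (tadd_spec H0 H1), <- H0, !comp_assoc, tpi_tplus. reflexivity.
Qed.

Lemma tadd_comm {X Y : C} {a b : Hom Y (T X)} : π X ∘ a = π X ∘ b -> tadd a b = tadd b a.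
Proof.
  intro H. destruct (tpair_exists H) as [k [H0 H1]].
  destruct (tpair_exists (eq_sym (tpr_fibred_map X))) as [s [S0 S1]].
  rewrite <- (tadd_spec H0 H1), <- (tplus_comm_ax S0 S1), <- comp_assoc.
  apply tadd_spec; rewrite comp_assoc; congruence.
Qed.

Lemma tadd_zero_l X Y (a : Hom Y (T X)) : tadd (z0 X ∘ (π X ∘ a)) a = a.
Proof.
  destruct (@tpair_exists X (T X) (z0 X ∘ π X) (idm (T X))) as [s [S0 S1]].
  { rewrite comp_assoc, tpi_tzero, comp_id_l. symmetry. apply comp_id_r. }
  rewrite <- (@tadd_spec _ _ _ _ (s ∘ a)).
  - rewrite comp_assoc, (tplus_zero_ax S0 S1). apply comp_id_l.
  - rewrite comp_assoc, S0. symmetry. apply comp_assoc.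
  - rewrite comp_assoc, S1. apply comp_id_l.
Qed.

Lemma tadd_zero_r X Y (a : Hom Y (T X)) : tadd a (z0 X ∘ (π X ∘ a)) = a.
Proof.
  rewrite tadd_comm; [apply tadd_zero_l|].
  rewrite (comp_assoc (π X) (z0 X)), tpi_tzero, comp_id_l. reflexivity.
Qed.

Lemma tadd_neg X Y (a : Hom Y (T X)) : tadd a (ng X ∘ a) = z0 X ∘ (π X ∘ a).
Proof.
  destruct (@tpair_exists X (T X) (idm (T X)) (ng X)) as [s [S0 S1]].
  { rewrite tpi_tneg. apply comp_id_r. }
  rewrite <- (@tadd_spec _ _ _ _ (s ∘ a)).
  - rewrite comp_assoc, (tplus_neg_ax S0 S1). symmetry. apply comp_assoc.
  - rewrite comp_assoc, S0. apply comp_id_l.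
  - rewrite comp_assoc, S1. reflexivity.
Qed.

Lemma tadd_assoc X Y (a b c : Hom Y (T X)) : π X ∘ a = π X ∘ b -> π X ∘ b = π X ∘ c ->
  tadd (tadd a b) c = tadd a (tadd b c).
Proof.
  intros Hab Hbc.
  pose proof (tpr_wide_pullback 3 X ltac:(lia)) as W3.
  destruct (wide_pullback_factor W3 Y (fun i => match i with 0 => a | 1 => b | _ => c end))
    as [k Hk].
  { intros [|[|[|i]]] [|[|[|j]]] Hi Hj; first [lia | congruence]. }
  pose proof (Hk 0 ltac:(lia)) as K0; pose proof (Hk 1 ltac:(lia)) as K1;
    pose proof (Hk 2 ltac:(lia)) as K2; cbn in K0, K1, K2.
  destruct W3 as [Hc3 _].
  destruct (@tpair_exists X _ (tpr t 3 X 0) (tpr t 3 X 1)) as [A [A0 A1]].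
  { apply Hc3; lia. }
  destruct (@tpair_exists X _ (tpr t 3 X 1) (tpr t 3 X 2)) as [Cc [C0 C1]].
  { apply Hc3; lia. }
  destruct (@tpair_exists X _ (pl X ∘ A) (tpr t 3 X 2)) as [B [B0 B1]].
  { rewrite comp_assoc, tpi_tplus, <- comp_assoc, A0. apply Hc3; lia. }
  destruct (@tpair_exists X _ (tpr t 3 X 0) (pl X ∘ Cc)) as [D [D0 D1]].
  { rewrite (comp_assoc (π X) (pl X)), tpi_tplus, <- comp_assoc, C0. apply Hc3; lia. }
  assert (EA : pl X ∘ (A ∘ k) = tadd a b)
    by (apply tadd_spec; rewrite comp_assoc; congruence).
  assert (EC : pl X ∘ (Cc ∘ k) = tadd b c)
    by (apply tadd_spec; rewrite comp_assoc; congruence).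
  transitivity (pl X ∘ (B ∘ k)).
  - symmetry. apply tadd_spec; rewrite comp_assoc.
    + rewrite B0, <- comp_assoc. exact EA.
    + rewrite B1. exact K2.
  - rewrite comp_assoc, (tplus_assoc_ax A0 A1 B0 B1 C0 C1 D0 D1), <- comp_assoc.
    apply tadd_spec; rewrite comp_assoc.
    + rewrite D0. exact K0.
    + rewrite D1, <- comp_assoc. exact EC.
Qed.

Lemma tadd_nat X X' (f : Hom X X') Y (a b : Hom Y (T X)) : π X ∘ a = π X ∘ b ->
  T1 f ∘ tadd a b = tadd (T1 f ∘ a) (T1 f ∘ b).
Proof.
  intro H. destruct (tpair_exists H) as [k [H0 H1]].
  destruct (@tpair_exists X' _ (T1 f ∘ p0 X) (T1 f ∘ p1 X)) as [h [Q0 Q1]].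
  { rewrite !comp_assoc, <- !tpi_nat, <- !comp_assoc, tpr_fibred_map. reflexivity. }
  rewrite <- (tadd_spec H0 H1), comp_assoc, <- (tplus_nat Q0 Q1), <- comp_assoc.
  apply tadd_spec; rewrite comp_assoc; [rewrite Q0 | rewrite Q1]; rewrite <- comp_assoc;
    congruence.
Qed.

Lemma tadd_cancel_l X Y (x y1 y2 : Hom Y (T X)) :
  π X ∘ x = π X ∘ y1 -> π X ∘ x = π X ∘ y2 -> tadd x y1 = tadd x y2 -> y1 = y2.
Proof.
  intros H1 H2 E.
  assert (Hsub : forall y, π X ∘ x = π X ∘ y -> y = tadd (ng X ∘ x) (tadd x y)).
  { intros y Hy. rewrite <- tadd_assoc by (rewrite ?tneg_pi; first [reflexivity | assumption]).
    rewrite (@tadd_comm _ _ (ng X ∘ x)), tadd_neg, Hy by apply tneg_pi.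
    symmetry. apply tadd_zero_l. }
  rewrite (Hsub y1 H1), (Hsub y2 H2), E. reflexivity.
Qed.

Lemma tlam_is_pullback X : exists (pp : Hom (T (T X)) (tTm t 2 X)) (zz : Hom X (tTm t 2 X)),
  is_pullback pp zz (λ X) (π X) /\
  forall Y (w : Hom Y (T (T X))) (d : Hom Y X),
    pp ∘ w = zz ∘ d <-> π (T X) ∘ w = z0 X ∘ d /\ T1 (π X) ∘ w = z0 X ∘ d.
Proof.
  destruct (@tpair_exists X _ (π (T X)) (T1 (π X))) as [pp [P0 P1]].
  { apply tpi_nat. }
  destruct (@tpair_exists X X (z0 X) (z0 X)) as [zz [Z0 Z1]]; [reflexivity|].
  exists pp, zz. split; [apply tlam_universal; assumption|].
  intros Y w d. split.
  - intro H. split; [rewrite <- P0, <- Z0 | rewrite <- P1, <- Z1]; right_assoc; rewrite H;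
      reflexivity.
  - intros [H0 H1]. apply tpair_jointly_monic; rewrite !comp_assoc;
      [rewrite P0, Z0 | rewrite P1, Z1]; assumption.
Qed.

Lemma tlam_factor {X Y : C} {w : Hom Y (T (T X))} {d : Hom Y X} :
  π (T X) ∘ w = z0 X ∘ d -> T1 (π X) ∘ w = z0 X ∘ d ->
  exists u, λ X ∘ u = w /\ π X ∘ u = d.
Proof.
  intros H1 H2. destruct (tlam_is_pullback X) as [pp [zz [PB Hcone]]].
  apply (pullback_factor PB). apply Hcone. auto.
Qed.

Lemma tlam_jointly_monic {X Y : C} (u1 u2 : Hom Y (T X)) :
  λ X ∘ u1 = λ X ∘ u2 -> π X ∘ u1 = π X ∘ u2 -> u1 = u2.
Proof.
  destruct (tlam_is_pullback X) as [pp [zz [PB _]]]. exact (pullback_jointly_monic PB _ u1 u2).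
Qed.

Lemma lam2_pairing X : exists h : Hom (tTm t 2 X) (tTm t 2 (T X)),
  p0 (T X) ∘ h = T1 (z0 X) ∘ p0 X /\ p1 (T X) ∘ h = λ X ∘ p1 X.
Proof.
  apply tpair_exists.
  rewrite !comp_assoc, <- tpi_nat, tpi_tlam, <- !comp_assoc, tpr_fibred_map. reflexivity.
Qed.

Lemma lam2_exists X : exists l, is_lambda2 t X l.
Proof.
  destruct (lam2_pairing X) as [h [H0 H1]].
  exists (τ X ∘ pl (T X) ∘ h). intros h' H0' H1'. f_equal.
  apply tpair_jointly_monic; congruence.
Qed.

Lemma lam2_summands_fibred {X Y : C} (e : Hom Y (tTm t 2 X)) :
  π (T X) ∘ (T1 (z0 X) ∘ (p0 X ∘ e)) = π (T X) ∘ (λ X ∘ (p1 X ∘ e)).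
Proof. rewrite !comp_assoc, <- tpi_nat, tpi_tlam, <- !comp_assoc, tpr_fibred. reflexivity. Qed.

Section Lambda2.
Context {X : C} {l : Hom (tTm t 2 X) (T (T X))} (Hl : is_lambda2 t X l).

Lemma lam2_tadd {Y} (e : Hom Y (tTm t 2 X)) :
  l ∘ e = τ X ∘ tadd (T1 (z0 X) ∘ (p0 X ∘ e)) (λ X ∘ (p1 X ∘ e)).
Proof.
  destruct (lam2_pairing X) as [h [H0 H1]].
  rewrite (Hl h H0 H1). right_assoc. f_equal.
  apply tadd_spec; rewrite comp_assoc; [rewrite H0 | rewrite H1]; right_assoc; reflexivity.
Qed.

Lemma ttau_lam2 {Y} (e : Hom Y (tTm t 2 X)) :
  τ X ∘ (l ∘ e) = tadd (T1 (z0 X) ∘ (p0 X ∘ e)) (λ X ∘ (p1 X ∘ e)).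
Proof. rewrite lam2_tadd, comp_assoc, ttau_invol. apply comp_id_l. Qed.

Lemma Tpi_ttau_lam2 {Y} (e : Hom Y (tTm t 2 X)) : T1 (π X) ∘ (τ X ∘ (l ∘ e)) = p0 X ∘ e.
Proof.
  rewrite ttau_lam2, tadd_nat by apply lam2_summands_fibred.
  rewrite Tpi_Tzero, comp_assoc, Tpi_tlam, <- comp_assoc, <- tpr_fibred.
  apply tadd_zero_r.
Qed.

Lemma Tpi_lam2 {Y} (e : Hom Y (tTm t 2 X)) :
  T1 (π X) ∘ (l ∘ e) = z0 X ∘ (π X ∘ (p0 X ∘ e)).
Proof.
  rewrite lam2_tadd, comp_assoc, Tpi_ttau, tadd_pi by apply lam2_summands_fibred.
  rewrite comp_assoc, <- tpi_nat, <- comp_assoc. reflexivity.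
Qed.

Lemma lam2_jointly_monic {Y} (e1 e2 : Hom Y (tTm t 2 X)) :
  l ∘ e1 = l ∘ e2 -> π X ∘ (p0 X ∘ e1) = π X ∘ (p0 X ∘ e2) -> e1 = e2.
Proof.
  intros E P.
  assert (V : p0 X ∘ e1 = p0 X ∘ e2).
  { rewrite <- (Tpi_ttau_lam2 e1), <- (Tpi_ttau_lam2 e2), E. reflexivity. }
  assert (E' : τ X ∘ (l ∘ e1) = τ X ∘ (l ∘ e2)) by (rewrite E; reflexivity).
  rewrite !ttau_lam2, V in E'.
  apply tadd_cancel_l in E'; [| rewrite <- V; apply lam2_summands_fibred
                               | apply lam2_summands_fibred].
  apply tpair_jointly_monic; [exact V|].
  apply tlam_jointly_monic; [exact E'|]. rewrite <- !tpr_fibred. exact P.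
Qed.

(* [w := τ c - T0 (π (T X) c)] satisfies both conditions of the pullback of the
   lift, so [w = λ u]; the pair [(π (T X) c, u)] is then the required point. *)
Lemma lam2_factor {Y} {c : Hom Y (T (T X))} {d : Hom Y X} :
  T1 (π X) ∘ c = z0 X ∘ d -> exists e, l ∘ e = c /\ π X ∘ (p0 X ∘ e) = d.
Proof.
  intro H.
  set (c' := τ X ∘ c). set (v := π (T X) ∘ c). set (tt := T1 (z0 X) ∘ v).
  assert (Hv : T1 (π X) ∘ c' = v) by (unfold c'; rewrite comp_assoc, Tpi_ttau; reflexivity).
  assert (Fc : π (T X) ∘ c' = z0 X ∘ d)
    by (unfold c'; rewrite comp_assoc, tpi_ttau; exact H).
  assert (Hvd : π X ∘ v = d).
  { unfold v. rewrite comp_assoc, tpi_nat, <- comp_assoc, H, comp_assoc, tpi_tzero.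
    apply comp_id_l. }
  assert (Ft : π (T X) ∘ tt = z0 X ∘ d)
    by (unfold tt; rewrite comp_assoc, <- tpi_nat, <- comp_assoc, Hvd; reflexivity).
  set (w := tadd c' (ng (T X) ∘ tt)).
  assert (Fw : π (T X) ∘ w = z0 X ∘ d)
    by (unfold w; rewrite tadd_pi; [exact Fc | rewrite tneg_pi; congruence]).
  assert (Gw : T1 (π X) ∘ w = z0 X ∘ d).
  { unfold w. rewrite tadd_nat by (rewrite tneg_pi; congruence).
    rewrite comp_assoc, tneg_nat, <- comp_assoc. unfold tt.
    rewrite Tpi_Tzero, Hv, tadd_neg, Hvd. reflexivity. }
  destruct (tlam_factor Fw Gw) as [u [U1 U2]].
  destruct (@tpair_exists X _ v u) as [e [E0 E1]]; [congruence|].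
  exists e. split.
  - rewrite lam2_tadd, E0, E1, U1. fold tt.
    assert (A : tadd tt w = c').
    { unfold w. rewrite <- tadd_assoc by (rewrite ?tneg_pi; congruence).
      rewrite (@tadd_comm _ _ tt) by congruence.
      rewrite tadd_assoc by (rewrite ?tneg_pi; congruence).
      rewrite tadd_neg, Ft, <- Fc. apply tadd_zero_r. }
    rewrite A. unfold c'. rewrite comp_assoc, ttau_invol. apply comp_id_l.
  - rewrite E0. exact Hvd.
Qed.

Lemma lam2_pullback : is_pullback (T1 (π X)) (z0 X) l (π X ∘ p0 X).
Proof.
  split.
  - rewrite <- (comp_id_r l), Tpi_lam2, !comp_id_r. reflexivity.
  - intros Y c d H. destruct (lam2_factor H) as [e [E1 E2]].
    exists e. split; [split; [exact E1 | rewrite <- comp_assoc; exact E2]|].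
    intros e' [E1' E2']. apply lam2_jointly_monic; [congruence|].
    rewrite <- comp_assoc in E2'. congruence.
Qed.

Lemma lam2_zero {Y} {e : Hom Y (tTm t 2 X)} {x : Hom Y X} :
  p0 X ∘ e = z0 X ∘ x -> p1 X ∘ e = z0 X ∘ x -> l ∘ e = T1 (z0 X) ∘ (z0 X ∘ x).
Proof.
  intros H0 H1. rewrite lam2_tadd, H0, H1, (comp_assoc (λ X)), tlam_zero, <- comp_assoc.
  replace (z0 (T X) ∘ (z0 X ∘ x))
    with (z0 (T X) ∘ (π (T X) ∘ (T1 (z0 X) ∘ (z0 X ∘ x)))).
  2:{ f_equal. rewrite comp_assoc, <- tpi_nat, <- comp_assoc,
        (comp_assoc (π X)), tpi_tzero, comp_id_l. reflexivity. }
  rewrite tadd_zero_r, comp_assoc, ttau_Tzero, comp_assoc, <- tlam_zero, tlam_zero_T,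
    <- comp_assoc. reflexivity.
Qed.

Lemma lam2_zero_inv {Y} {e : Hom Y (tTm t 2 X)} {x : Hom Y X} :
  l ∘ e = T1 (z0 X) ∘ (z0 X ∘ x) -> p0 X ∘ e = z0 X ∘ x /\ p1 X ∘ e = z0 X ∘ x.
Proof.
  intro H.
  assert (Hx : π X ∘ (p0 X ∘ e) = x).
  { apply tzero_cancel. rewrite <- Tpi_lam2, H. apply Tpi_Tzero. }
  destruct (@tpair_exists X Y (z0 X ∘ x) (z0 X ∘ x) eq_refl) as [z2 [Z0 Z1]].
  assert (e = z2) as ->; [|auto].
  apply lam2_jointly_monic.
  - rewrite H. symmetry. apply lam2_zero; assumption.
  - rewrite Hx, Z0, comp_assoc, tpi_tzero, comp_id_l. reflexivity.
Qed.

End Lambda2.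

Lemma lam2_nat {X X' : C} (f : Hom X X') {lX lX'}
    (HX : is_lambda2 t X lX) (HX' : is_lambda2 t X' lX')
    {Y} {e : Hom Y (tTm t 2 X)} {e' : Hom Y (tTm t 2 X')} :
  p0 X' ∘ e' = T1 f ∘ (p0 X ∘ e) -> p1 X' ∘ e' = T1 f ∘ (p1 X ∘ e) ->
  T1 (T1 f) ∘ (lX ∘ e) = lX' ∘ e'.
Proof.
  intros H0 H1.
  rewrite (lam2_tadd HX), (lam2_tadd HX'), comp_assoc, ttau_nat, <- comp_assoc.
  rewrite tadd_nat by apply lam2_summands_fibred.
  f_equal. f_equal.
  - rewrite comp_assoc, <- fmap_comp, tzero_nat, fmap_comp, <- comp_assoc, H0. reflexivity.
  - rewrite comp_assoc, tlam_nat, <- comp_assoc, H1. reflexivity.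
Qed.

Lemma zn_S n X : zn t (S n) X = Tn_map T n (z0 X) ∘ zn t n X.
Proof. reflexivity. Qed.

Lemma zn_nat n : forall X Y (f : Hom X Y), Tn_map T n f ∘ zn t n X = zn t n Y ∘ f.
Proof.
  induction n as [|n IH]; intros X Y f.
  - cbn. rewrite comp_id_l. apply comp_id_r.
  - cbn [zn Tn_map Tn]. rewrite comp_assoc.
    rewrite <- Tn_map_comp, tzero_nat, Tn_map_comp, <- comp_assoc, IH, comp_assoc.
    reflexivity.
Qed.

Fixpoint pin (n : nat) (X : C) : Hom (Tn T (S n) X) X :=
  match n with
  | 0 => π X
  | S m => pin m X ∘ Tn_map T (S m) (π X)
  end.

Lemma pin_zn n X : pin n X ∘ zn t (S n) X = idm X.
Proof.
  induction n as [|n IH].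
  - cbn. rewrite comp_id_r. apply tpi_tzero.
  - change (pin (S n) X) with (pin n X ∘ Tn_map T (S n) (π X)).
    rewrite zn_S, comp_assoc, <- (comp_assoc (pin n X)), <- Tn_map_comp, tpi_tzero,
      Tn_map_id, comp_id_r. exact IH.
Qed.

Lemma pin_nat n : forall X Y (f : Hom X Y), f ∘ pin n X = pin n Y ∘ Tn_map T (S n) f.
Proof.
  induction n as [|n IH]; intros X Y f.
  - apply tpi_nat.
  - change (pin (S n) X) with (pin n X ∘ Tn_map T (S n) (π X)).
    change (pin (S n) Y) with (pin n Y ∘ Tn_map T (S n) (π Y)).
    change (Tn_map T (S (S n)) f) with (Tn_map T (S n) (T1 f)).
    rewrite comp_assoc, IH, <- !comp_assoc, <- !Tn_map_comp, tpi_nat, Tn_map_comp. reflexivity.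
Qed.

End TangentStructure.

Section Equivariance.
Context {C : Cat} {G : GroupoidData C}.

Lemma equivariant_act {X Y : ActData G} {f : Hom (bE X) (bE Y)} :
  act_pullback X -> act_pullback Y -> equivariant X Y f ->
  forall Z (x : Hom Z (bA X)) (y : Hom Z (bA Y)),
  baE Y ∘ y = f ∘ (baE X ∘ x) -> baG Y ∘ y = baG X ∘ x ->
  f ∘ (bact X ∘ x) = bact Y ∘ y.
Proof.
  intros [AXc _] AY [Hr Hact] Z x y Hy1 Hy2.
  destruct (pullback_factor AY _ (f ∘ baE X) (baG X)) as [k [K1 K2]].
  { rewrite comp_assoc, Hr. exact AXc. }
  rewrite comp_assoc, (Hact k K1 K2), <- comp_assoc. f_equal.
  apply (pullback_jointly_monic AY).
  - rewrite comp_assoc, K1, Hy1. symmetry. apply comp_assoc.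
  - rewrite comp_assoc, K2, Hy2. reflexivity.
Qed.

Lemma equivariant_comp {X Y Z : ActData G} {f : Hom (bE X) (bE Y)} {g : Hom (bE Y) (bE Z)} :
  act_pullback X -> act_pullback Y -> act_pullback Z ->
  equivariant X Y f -> equivariant Y Z g -> equivariant X Z (g ∘ f).
Proof.
  intros AX AY AZ Hf Hg. split.
  - rewrite comp_assoc, (proj1 Hg). exact (proj1 Hf).
  - intros k K1 K2.
    destruct (pullback_factor AY _ (f ∘ baE X) (baG X)) as [kY [Y1 Y2]].
    { rewrite comp_assoc, (proj1 Hf). exact (proj1 AX). }
    rewrite <- comp_assoc, (proj2 Hf kY Y1 Y2).
    apply (equivariant_act AY AZ Hg).
    + rewrite K1, Y1. symmetry. apply comp_assoc.
    + rewrite K2, Y2. reflexivity.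
Qed.

Lemma equivariant_of_jointly_monic {X W A B : ActData G} {f : Hom (bE W) (bE A)}
    {g : Hom (bE W) (bE B)} {h : Hom (bE X) (bE W)} :
  act_pullback X -> act_pullback W -> act_pullback A -> act_pullback B ->
  (forall Y (y1 y2 : Hom Y (bE W)), f ∘ y1 = f ∘ y2 -> g ∘ y1 = g ∘ y2 -> y1 = y2) ->
  equivariant W A f -> equivariant W B g ->
  equivariant X A (f ∘ h) -> equivariant X B (g ∘ h) -> equivariant X W h.
Proof.
  intros AX AW AA AB Hmono Hf Hg Hfh Hgh. split.
  - rewrite <- (proj1 Hfh), <- (proj1 Hf). symmetry. apply comp_assoc.
  - intros k K1 K2.
    assert (Hside : forall (A' : ActData G) (f' : Hom (bE W) (bE A')),
      act_pullback A' -> equivariant W A' f' -> equivariant X A' (f' ∘ h) ->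
      f' ∘ (h ∘ bact X) = f' ∘ (bact W ∘ k)).
    { intros A' f' AA' Hf' Hf'h.
      destruct (pullback_factor AA' _ ((f' ∘ h) ∘ baE X) (baG X)) as [kA [KA1 KA2]].
      { rewrite comp_assoc, (proj1 Hf'h). exact (proj1 AX). }
      rewrite comp_assoc, (proj2 Hf'h kA KA1 KA2). symmetry.
      apply (equivariant_act AW AA' Hf').
      - rewrite KA1, K1. symmetry. apply comp_assoc.
      - rewrite KA2, K2. reflexivity. }
    apply Hmono; apply Hside; assumption.
Qed.

End Equivariance.

Section VerticalBundles.
Context {C : Cat} (t : TangentData C) (Ht : tangent_axioms t).
Context {G : GroupoidData C} (HG : groupoid_axioms G).
Context {E : Bundle G} (HE : bundle_axioms E) (HEd : differentiable_bundle t E).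
Local Notation T := (tT t).

(* [G_1] is isomorphic to [G_1 x^{s,t_0} G_0 = Gs G 1] since [t_0 = id], so the
   action pullback is one of the pullbacks along [t_k] that [T^n] preserves. *)
Lemma Tn_action_pullback n :
  is_pullback (Tn_map T (S n) (br E)) (Tn_map T (S n) (gt G))
              (Tn_map T (S n) (baE E)) (Tn_map T (S n) (baG E)).
Proof.
  destruct HG as (Htk0 & Htk & Hgp & _).
  destruct HEd as (_ & _ & _ & _ & HET).
  pose proof (Hgp 0) as PB0. rewrite Htk0 in PB0.
  destruct (pullback_id_iso PB0) as [u [Hu1 Hu2]].
  assert (PBq : is_pullback (br E) (tk G 1) (baE E) (u ∘ baG E)).
  { rewrite Htk. exact (pullback_iso_r _ _ _ _ _ _ Hu1 Hu2 (proj1 HE)). }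
  pose proof (HET (S n) 1 _ _ _ ltac:(lia) PBq) as TPB.
  rewrite Htk, !Tn_map_comp in TPB.
  assert (Hiso : forall X Y (j : Hom X Y) j', j' ∘ j = idm X ->
            Tn_map T (S n) j' ∘ Tn_map T (S n) j = idm _).
  { intros X Y j j' Hj. rewrite <- Tn_map_comp, Hj. apply Tn_map_id. }
  pose proof (pullback_iso_r _ _ _ _ (Tn_map T (S n) (gp1 G 0)) (Tn_map T (S n) u)
                (Hiso _ _ _ _ Hu2) (Hiso _ _ _ _ Hu1) TPB) as H.
  rewrite <- comp_assoc, (Hiso _ _ _ _ Hu1), comp_id_r, comp_assoc,
    (Hiso _ _ _ _ Hu1), comp_id_l in H.
  exact H.
Qed.

Section Vertical.
Context (n : nat) {V : ActData G} {i : Hom (bE V) (Tn T (S n) (bE E))}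
  (HV : is_vertical_bundle t (S n) E V i).

Lemma vertical_br : br V = br E ∘ (pin t n (bE E) ∘ i).
Proof.
  rewrite (pullback_leg_of_retraction (pin t n (Gs G 0)) (proj1 HV) (pin_zn t Ht n _)).
  rewrite comp_assoc, <- (pin_nat t Ht), <- comp_assoc. reflexivity.
Qed.

Lemma vertical_mono Y (y1 y2 : Hom Y (bE V)) : i ∘ y1 = i ∘ y2 -> y1 = y2.
Proof. exact (pullback_mono_of_retraction _ (proj1 HV) (pin_zn t Ht n _) Y y1 y2). Qed.

Lemma vertical_action_lift : exists φ : Hom (bA V) (Tn T (S n) (bA E)),
  Tn_map T (S n) (baE E) ∘ φ = i ∘ baE V /\
  Tn_map T (S n) (baG E) ∘ φ = zn t (S n) (G1 G) ∘ baG V /\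
  i ∘ bact V = Tn_map T (S n) (bact E) ∘ φ.
Proof.
  destruct HV as [PV [AV IV]].
  destruct (pullback_factor (Tn_action_pullback n) _ (i ∘ baE V)
              (zn t (S n) (G1 G) ∘ baG V)) as [φ [P1 P2]].
  { rewrite comp_assoc, (proj1 PV), <- comp_assoc, (proj1 AV),
      (comp_assoc (Tn_map T (S n) (gt G))), (zn_nat t Ht), <- comp_assoc.
    reflexivity. }
  exists φ. auto.
Qed.

Lemma vertical_proj_equivariant : equivariant V E (pin t n (bE E) ∘ i).
Proof.
  split; [symmetry; exact vertical_br|].
  intros k K1 K2.
  destruct vertical_action_lift as [φ [P1 [P2 P3]]].
  assert (Hk : pin t n (bA E) ∘ φ = k).
  { apply (pullback_jointly_monic (proj1 HE)).
    - rewrite comp_assoc, (pin_nat t Ht), <- comp_assoc, P1, K1, comp_assoc. reflexivity.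
    - rewrite comp_assoc, (pin_nat t Ht), <- comp_assoc, P2, comp_assoc, (pin_zn t Ht),
        comp_id_l, K2. reflexivity. }
  rewrite <- Hk, <- comp_assoc, P3, comp_assoc, <- (pin_nat t Ht), <- comp_assoc.
  reflexivity.
Qed.

End Vertical.
End VerticalBundles.

Section VerticalSquare.
Context {C : Cat} (t : TangentData C) (Ht : tangent_axioms t).
Context {G : GroupoidData C} (HG : groupoid_axioms G).
Context {E : Bundle G} (HE : bundle_axioms E) (HEd : differentiable_bundle t E).
Context {VE : ActData G} {iV : Hom (bE VE) (tT t (bE E))} (HVE : is_vertical_bundle t 1 E VE iV).
Context {V2E : ActData G} {i2 : Hom (bE V2E) (tT t (tT t (bE E)))}
  (HV2E : is_vertical_bundle t 2 E V2E i2).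
Context {W : ActData G} {w1 w2 : Hom (bE W) (bE VE)}
  (HW : is_pullback (tpi t (bE E) ∘ iV) (tpi t (bE E) ∘ iV) w1 w2)
  (HWr : br W = br VE ∘ w1) (HWa : act_pullback W)
  (HWact : forall u1 u2 : Hom (bA W) (bA VE),
      baE VE ∘ u1 = w1 ∘ baE W -> baG VE ∘ u1 = baG W ->
      baE VE ∘ u2 = w2 ∘ baE W -> baG VE ∘ u2 = baG W ->
      w1 ∘ bact W = bact VE ∘ u1 /\ w2 ∘ bact W = bact VE ∘ u2).
Context {iW : Hom (bE W) (tTm t 2 (bE E))}
  (HiW1 : tpr t 2 (bE E) 0 ∘ iW = iV ∘ w1) (HiW2 : tpr t 2 (bE E) 1 ∘ iW = iV ∘ w2).
Context {zero' : Hom (bE E) (bE VE)} (Hzero' : iV ∘ zero' = tzero t (bE E)).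
Context {l2 : Hom (tTm t 2 (bE E)) (tT t (tT t (bE E)))} (Hl2 : is_lambda2 t (bE E) l2).
Context {lam2' : Hom (bE W) (bE V2E)} (Hlam2' : i2 ∘ lam2' = l2 ∘ iW).
Context {pi1' : Hom (bE V2E) (bE VE)} (Hpi1' : iV ∘ pi1' = fmap (tT t) (tpi t (bE E)) ∘ i2).

Local Notation T1 f := (fmap (tT t) f).
Local Notation π := (tpi t).
Local Notation z0 := (tzero t).
Local Notation pr0 X := (tpr t 2 X 0).
Local Notation pr1 X := (tpr t 2 X 1).

Lemma iV_mono Y (y1 y2 : Hom Y (bE VE)) : iV ∘ y1 = iV ∘ y2 -> y1 = y2.
Proof. exact (vertical_mono t Ht 0 HVE Y y1 y2). Qed.

Lemma i2_mono Y (y1 y2 : Hom Y (bE V2E)) : i2 ∘ y1 = i2 ∘ y2 -> y1 = y2.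
Proof. exact (vertical_mono t Ht 1 HV2E Y y1 y2). Qed.

Lemma br_VE : br VE = br E ∘ (π (bE E) ∘ iV).
Proof. exact (vertical_br t Ht 0 HVE). Qed.

Lemma square_commutes : pi1' ∘ lam2' = zero' ∘ (π (bE E) ∘ iV ∘ w1).
Proof.
  apply iV_mono.
  rewrite (comp_assoc iV pi1'), Hpi1', <- (comp_assoc _ i2 lam2'), Hlam2',
    (Tpi_lam2 t Ht Hl2), HiW1, (comp_assoc iV zero'), Hzero'.
  right_assoc. reflexivity.
Qed.

Lemma square_jointly_monic Y (y1 y2 : Hom Y (bE W)) :
  lam2' ∘ y1 = lam2' ∘ y2 ->
  (π (bE E) ∘ iV ∘ w1) ∘ y1 = (π (bE E) ∘ iV ∘ w1) ∘ y2 ->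
  y1 = y2.
Proof.
  intros H1 H2. right_assoc. repeat rewrite <- comp_assoc in H2.
  assert (HiW : iW ∘ y1 = iW ∘ y2).
  { apply (pullback_jointly_monic (lam2_pullback t Ht Hl2)).
    - rewrite !comp_assoc, <- Hlam2', <- !comp_assoc, H1. reflexivity.
    - right_assoc. rewrite !(comp_eq_r HiW1). right_assoc. exact H2. }
  apply (pullback_jointly_monic HW); apply iV_mono.
  - rewrite !comp_assoc, <- HiW1, <- !comp_assoc, HiW. reflexivity.
  - rewrite !comp_assoc, <- HiW2, <- !comp_assoc, HiW. reflexivity.
Qed.

Lemma iW_factor {Y} {e : Hom Y (tTm t 2 (bE E))} {a : Hom Y (bE V2E)} :
  l2 ∘ e = i2 ∘ a -> exists h, iW ∘ h = e.
Proof.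
  intro He.
  destruct (lam2_exists t Ht (Gs G 0)) as [lG0 HlG0].
  destruct (tpair_exists t Ht (a := T1 (br E) ∘ (pr0 _ ∘ e)) (b := T1 (br E) ∘ (pr1 _ ∘ e)))
    as [e' [E0 E1]].
  { rewrite !comp_assoc, <- !(tpi_nat t Ht), <- !comp_assoc, (tpr_fibred t Ht). reflexivity. }
  pose proof (proj1 (proj1 HV2E)) as PV2c. cbn [Tn Tn_map zn] in PV2c.
  rewrite comp_id_r in PV2c.
  assert (Hρ : lG0 ∘ e' = T1 (z0 (Gs G 0)) ∘ (z0 (Gs G 0) ∘ (br V2E ∘ a))).
  { rewrite <- (lam2_nat t Ht (br E) Hl2 HlG0 E0 E1), He, comp_assoc, PV2c.
    right_assoc. reflexivity. }
  destruct (lam2_zero_inv t Ht HlG0 Hρ) as [Z0 Z1].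
  pose proof (proj1 HVE) as PV. cbn [Tn Tn_map zn] in PV. rewrite comp_id_r in PV.
  destruct (pullback_factor PV _ (pr0 _ ∘ e) (br V2E ∘ a)) as [v1 [V1 _]].
  { rewrite <- E0. exact Z0. }
  destruct (pullback_factor PV _ (pr1 _ ∘ e) (br V2E ∘ a)) as [v2 [V2 _]].
  { rewrite <- E1. exact Z1. }
  destruct (pullback_factor HW _ v1 v2) as [h [H1 H2]].
  { right_assoc. rewrite V1, V2. apply (tpr_fibred t Ht). }
  exists h. apply (tpair_jointly_monic t Ht).
  - rewrite comp_assoc, HiW1, <- comp_assoc, H1. exact V1.
  - rewrite comp_assoc, HiW2, <- comp_assoc, H2. exact V2.
Qed.

Lemma square_is_pullback : is_pullback pi1' zero' lam2' (π (bE E) ∘ iV ∘ w1).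
Proof.
  split; [exact square_commutes|].
  intros Y a b Hab.
  assert (Hc : T1 (π (bE E)) ∘ (i2 ∘ a) = z0 (bE E) ∘ b).
  { rewrite comp_assoc, <- Hpi1', <- comp_assoc, Hab, comp_assoc, Hzero'. reflexivity. }
  destruct (pullback_factor (lam2_pullback t Ht Hl2) _ _ _ Hc) as [e [E1 E2]].
  destruct (iW_factor E1) as [h Hh].
  assert (F1 : lam2' ∘ h = a).
  { apply i2_mono.
    rewrite comp_assoc, Hlam2', <- comp_assoc, Hh. exact E1. }
  assert (F2 : (π (bE E) ∘ iV ∘ w1) ∘ h = b).
  { rewrite <- E2, <- Hh. right_assoc. rewrite (comp_eq_r HiW1). right_assoc.
    reflexivity. }
  exists h. split; [split; assumption|].
  intros h' [F1' F2']. apply square_jointly_monic; congruence.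
Qed.

Lemma br_w1_w2 : br VE ∘ w1 = br VE ∘ w2.
Proof.
  rewrite br_VE, <- !(comp_assoc (br E)), (proj1 HW). reflexivity.
Qed.

Lemma w1_equivariant : equivariant W VE w1.
Proof.
  split; [symmetry; exact HWr|].
  intros u1 U11 U12.
  destruct (pullback_factor (proj1 (proj2 HVE)) _ (w2 ∘ baE W) (baG W)) as [u2 [U21 U22]].
  { rewrite comp_assoc, <- br_w1_w2, <- HWr. exact (proj1 HWa). }
  exact (proj1 (HWact u1 u2 U11 U12 U21 U22)).
Qed.

Lemma proj_w1_equivariant : equivariant W E (π (bE E) ∘ iV ∘ w1).
Proof.
  apply (equivariant_comp HWa (proj1 (proj2 HVE)) (proj1 HE) w1_equivariant).
  exact (vertical_proj_equivariant t Ht HG HE HEd 0 HVE).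
Qed.

(* Each component of [iW] is [iV] after a projection, so it carries the lift of
   the action given by [VE] being vertical. *)
Lemma diagonal_action_lift : exists P : Hom (bA W) (tTm t 2 (bA E)),
  forall j, (j < 2)%nat ->
  T1 (baE E) ∘ (tpr t 2 _ j ∘ P) = tpr t 2 _ j ∘ (iW ∘ baE W) /\
  T1 (baG E) ∘ (tpr t 2 _ j ∘ P) = z0 (G1 G) ∘ baG W /\
  T1 (bact E) ∘ (tpr t 2 _ j ∘ P) = tpr t 2 _ j ∘ (iW ∘ bact W).
Proof.
  destruct (vertical_action_lift t Ht HG HE HEd 0 HVE) as [φ [Φ1 [Φ2 Φ3]]].
  change (Hom (bA VE) (tT t (bA E))) in φ.
  cbn [Tn Tn_map zn] in Φ1, Φ2, Φ3. rewrite comp_id_r in Φ2.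
  pose proof (proj1 (proj2 HVE)) as AV.
  destruct (pullback_factor AV _ (w1 ∘ baE W) (baG W)) as [u1 [U11 U12]].
  { rewrite comp_assoc, <- HWr. exact (proj1 HWa). }
  destruct (pullback_factor AV _ (w2 ∘ baE W) (baG W)) as [u2 [U21 U22]].
  { rewrite comp_assoc, <- br_w1_w2, <- HWr. exact (proj1 HWa). }
  destruct (HWact u1 u2 U11 U12 U21 U22) as [A1 A2].
  assert (Hφ : forall u w, baE VE ∘ u = w ∘ baE W -> baG VE ∘ u = baG W ->
            w ∘ bact W = bact VE ∘ u ->
            T1 (baE E) ∘ (φ ∘ u) = iV ∘ w ∘ baE W /\
            T1 (baG E) ∘ (φ ∘ u) = z0 (G1 G) ∘ baG W /\
            T1 (bact E) ∘ (φ ∘ u) = iV ∘ w ∘ bact W).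
  { intros u w HuE HuG HuA. rewrite !comp_assoc, Φ1, Φ2, <- Φ3, <- !comp_assoc, HuE, HuG, HuA.
    auto. }
  destruct (Hφ u1 w1 U11 U12 A1) as (F1E & F1G & F1A).
  destruct (Hφ u2 w2 U21 U22 A2) as (F2E & F2G & F2A).
  destruct (tpair_exists t Ht (a := φ ∘ u1) (b := φ ∘ u2)) as [P [P0 P1]].
  { apply (pullback_jointly_monic (proj1 HE));
      rewrite !comp_assoc, !(tpi_nat t Ht); right_assoc.
    - rewrite F1E, F2E, !comp_assoc, (proj1 HW). reflexivity.
    - rewrite F1G, F2G. reflexivity. }
  exists P. intros [|[|j]] Hj; [| | lia]; rewrite ?P0, ?P1, !(comp_assoc _ iW), ?HiW1, ?HiW2;
    auto.
Qed.

(* By naturality of [λ_2], the lift is [λ_2] of the diagonal lift. *)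
Lemma lam2'_action_lift : exists ψ : Hom (bA W) (tT t (tT t (bA E))),
  T1 (T1 (baE E)) ∘ ψ = i2 ∘ (lam2' ∘ baE W) /\
  T1 (T1 (baG E)) ∘ ψ = T1 (z0 (G1 G)) ∘ (z0 (G1 G) ∘ baG W) /\
  i2 ∘ (lam2' ∘ bact W) = T1 (T1 (bact E)) ∘ ψ.
Proof.
  destruct diagonal_action_lift as [P HP].
  destruct (HP 0 ltac:(lia)) as (P0E & P0G & P0A).
  destruct (HP 1 ltac:(lia)) as (P1E & P1G & P1A).
  destruct (lam2_exists t Ht (bA E)) as [lA HlA].
  destruct (lam2_exists t Ht (G1 G)) as [lG1 HlG1].
  destruct (tpair_exists t Ht (a := z0 (G1 G) ∘ baG W) (b := z0 (G1 G) ∘ baG W) eq_refl)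
    as [z2 [Z0 Z1]].
  exists (lA ∘ P). split; [|split].
  - rewrite (lam2_nat t Ht (baE E) HlA Hl2 (eq_sym P0E) (eq_sym P1E)), comp_assoc,
      <- Hlam2'.
    symmetry. apply comp_assoc.
  - rewrite (lam2_nat t Ht (baG E) HlA HlG1 (e' := z2)); [|congruence|congruence].
    exact (lam2_zero t Ht HlG1 Z0 Z1).
  - rewrite (comp_assoc i2), Hlam2', <- comp_assoc.
    symmetry. exact (lam2_nat t Ht (bact E) HlA Hl2 (eq_sym P0A) (eq_sym P1A)).
Qed.

Lemma lam2'_equivariant : equivariant W V2E lam2'.
Proof.
  split.
  - rewrite (vertical_br t Ht 1 HV2E), HWr, br_VE.
    change (pin t 1 (bE E)) with (π (bE E) ∘ T1 (π (bE E))).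
    cbn [Tn]. right_assoc.
    rewrite Hlam2', (Tpi_lam2 t Ht Hl2), (comp_assoc (π (bE E))), (tpi_tzero t Ht),
      comp_id_l, HiW1.
    reflexivity.
  - intros k K1 K2. apply i2_mono.
    destruct lam2'_action_lift as [ψ [Ψ1 [Ψ2 Ψ3]]].
    destruct (vertical_action_lift t Ht HG HE HEd 1 HV2E) as [φ2 [Q1 [Q2 Q3]]].
    change (Hom (bA V2E) (tT t (tT t (bA E)))) in φ2.
    cbn [Tn Tn_map zn] in Q1, Q2, Q3. rewrite comp_id_r in Q2.
    rewrite Ψ3, (comp_assoc i2), Q3, <- comp_assoc. f_equal.
    apply (pullback_jointly_monic (Tn_action_pullback t HG HE HEd 1)); cbn [Tn Tn_map].
    + rewrite Ψ1, (comp_assoc _ φ2), Q1, <- comp_assoc, K1. reflexivity.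
    + rewrite Ψ2, (comp_assoc _ φ2), Q2, <- !comp_assoc, K2. reflexivity.
Qed.

End VerticalSquare.
Theorem mainTheorem15
  (C : Cat) (t : TangentData C) (Ht : tangent_axioms t)
  (G : GroupoidData C) (HG : groupoid_axioms G)
  (HGd : differentiable_groupoid G t)
  (E : Bundle G) (HE : bundle_axioms E) (HEd : differentiable_bundle t E)
  (* VE = V^[1]E, with monomorphism iV : VE -> TE *)
  (VE : ActData G) (iV : Hom (bE VE) (tT t (bE E)))
  (HVE : is_vertical_bundle t 1 E VE iV)
  (* V^[2]E, with monomorphism i2 : V^[2]E -> T^2E *)
  (V2E : ActData G) (i2 : Hom (bE V2E) (Tn (tT t) 2 (bE E)))
  (HV2E : is_vertical_bundle t 2 E V2E i2)
  (* V_2E = VE x_E VE over pi'_E = pi_E o iV, with the diagonal action *)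
  (W : ActData G) (w1 w2 : Hom (bE W) (bE VE))
  (HW : is_pullback (tpi t (bE E) ∘ iV) (tpi t (bE E) ∘ iV) w1 w2)
  (HWr : br W = br VE ∘ w1) (HWa : act_pullback W)
  (HWact : forall u1 u2 : Hom (bA W) (bA VE),
      baE VE ∘ u1 = w1 ∘ baE W -> baG VE ∘ u1 = baG W ->
      baE VE ∘ u2 = w2 ∘ baE W -> baG VE ∘ u2 = baG W ->
      w1 ∘ bact W = bact VE ∘ u1 /\ w2 ∘ bact W = bact VE ∘ u2)
  (* i_{V_2E} : V_2E -> T_2E *)
  (iW : Hom (bE W) (tTm t 2 (bE E)))
  (HiW1 : tpr t 2 (bE E) 0 ∘ iW = iV ∘ w1)
  (HiW2 : tpr t 2 (bE E) 1 ∘ iW = iV ∘ w2)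
  (* 0'_E *)
  (z' : Hom (bE E) (bE VE)) (Hz' : iV ∘ z' = tzero t (bE E))
  (* lambda_{2,E} and lambda'_{2,E} *)
  (l2 : Hom (tTm t 2 (bE E)) (Tn (tT t) 2 (bE E))) (Hl2 : is_lambda2 t (bE E) l2)
  (l' : Hom (bE W) (bE V2E)) (Hl' : i2 ∘ l' = l2 ∘ iW)
  (* pi'^[1]_E *)
  (p1 : Hom (bE V2E) (bE VE))
  (Hp1 : iV ∘ p1 = fmap (tT t) (tpi t (bE E)) ∘ i2) :
  (* the square commutes ... *)
  p1 ∘ l' = z' ∘ (tpi t (bE E) ∘ iV ∘ w1) /\
  (* ... is a pullback in C ... *)
  is_pullback p1 z' l' (tpi t (bE E) ∘ iV ∘ w1) /\
  (* ... and is a pullback in the category of right G-bundles and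
     G-equivariant bundle morphisms *)
  (forall (X : Bundle G), bundle_axioms X ->
     forall (a : Hom (bE X) (bE E)) (b : Hom (bE X) (bE V2E)),
       equivariant X E a -> equivariant X V2E b ->
       p1 ∘ b = z' ∘ a ->
       exists! h : Hom (bE X) (bE W),
         equivariant X W h /\ l' ∘ h = b /\ (tpi t (bE E) ∘ iV ∘ w1) ∘ h = a).
Proof.
  assert (PB : is_pullback p1 z' l' (tpi t (bE E) ∘ iV ∘ w1))
    by (eapply square_is_pullback; eassumption).
  split; [exact (proj1 PB)|]. split; [exact PB|].
  intros X [AX _] a b Ha Hb Hab.
  destruct (pullback_factor PB _ b a Hab) as [h [Hlh Hph]].
  exists h. split.
  - split; [|split; assumption].
    apply (equivariant_of_jointly_monic AX HWa (proj1 (proj2 HV2E)) (proj1 HE)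
             (f := l') (g := tpi t (bE E) ∘ iV ∘ w1)).
    + eapply square_jointly_monic; eassumption.
    + eapply lam2'_equivariant; eassumption.
    + eapply proj_w1_equivariant; eassumption.
    + rewrite Hlh. exact Hb.
    + rewrite Hph. exact Ha.
  - intros h' (_ & Hlh' & Hph'). eapply square_jointly_monic; try eassumption; congruence.
Qed.
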